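(* Let $V$ be a family of representations of $\mathcal G_K$ over $S$, $r\ge r_0$, and write $\mathbf D^r=\mathbf D^r_L$, $\mathbf D^{pr}=\mathbf D^{pr}_L$. Let $M_0=(\mathbf D^r)^{\varphi=1}=\{z\in\mathbf D^r:\varphi(z)=z\}$ and $N=\mathbf D^{pr}/(\varphi-1)\mathbf D^r$ (both $G_\infty$-modules). For a $G_\infty$-module $M$ let $f_M(m)=((\gamma-1)m,(\tau-1)m)$ and $g_M(a,b)=(\tau-1)a+(1-\delta^{-1}\gamma)b$. Let $d_0,d_1,d_2$ be the maps $d_0(a)=((\varphi-1)a,(\gamma-1)a,(\tau-1)a)$ on $\mathbf D^r$, $d_1(a,b,c)=((\gamma-1)a+(1-\varphi)b,(\tau-1)a+(1-\varphi)c,(\tau-1)b+(1-\delta^{-1}\gamma)c)$ on $\mathbf D^{pr}\oplus\mathbf D^r\oplus\mathbf D^r$, and $d_2(a,b,c)=(\tau-1)a+(1-\delta^{-1}\gamma)b+(\varphi-1)c$ on $\mathbf D^{pr}\oplus\mathbf D^{pr}\oplus\mathbf D^r$. Then the sequence $$0\to\frac{\ker g_{M_0}}{\mathrm{im}\,f_{M_0}}\xrightarrow{\delta_1}\frac{\ker d_1}{\mathrm{im}\,d_0}\xrightarrow{\delta_2}N^{\tau=1,\gamma=1}\xrightarrow{\delta_3}\frac{M_0}{(\tau-1)M_0+(1-\delta^{-1}\gamma)M_0}\xrightarrow{\delta_4}\frac{\ker d_2}{\mathrm{im}\,d_1}\xrightarrow{\delta_5}\frac{\ker g_N}{\mathrm{im}\,f_N}\to0$$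 is well defined and exact, where $\delta_1(y,z)=(0,y,z)$, $\delta_2(x,y,z)=x$, $\delta_3(x)=(\tau-1)y_x+(1-\delta^{-1}\gamma)z_x$ for any $y_x,z_x\in\mathbf D^r$ with $(\gamma-1)x=(\varphi-1)y_x$ and $(\tau-1)x=(\varphi-1)z_x$, $\delta_4(z)=(0,0,z)$, and $\delta_5(x,y,z)=(x,y)$ (all on classes).
   Context: Let $p$ be an odd prime, $K/\mathbf Q_p$ finite with uniformizer $\pi$ and residue field $k$; $\overline K$, $\mathbf C_p$, $\mathcal O_{\mathbf C_p}$, tilt $\mathbf C_p^\flat$ with $v^\flat(x)=v_p(x^\sharp)$. Fix $\pi_0=\pi$, $\pi_{n+1}^p=\pi_n$ and compatible primitive $p^n$-th roots of unity $\epsilon_n$; $K_\infty=\bigcup K(\pi_n)$, $K_{\mathrm{cycl}}=\bigcup K(\epsilon_n)$, $L=K_\infty K_{\mathrm{cycl}}$, $\mathcal G_K=\mathrm{Gal}(\overline K/K)$, $H_\infty=\mathrm{Gal}(\overline K/L)$, $G_\infty=\mathrm{Gal}(L/K)$, $H_{\tau,K}=\mathrm{Gal}(\overline K/K_\infty)$, $\chi$ cyclotomic character, $c(g)\in\mathbf Z_p$ given by $g(\pi_n)=\epsilon_n^{c(g)}\pi_n$. $\gamma$ is a topological generator of $\mathrm{Gal}(L/K_\infty)$, $\tau\in\mathrm{Gal}(L/K_{\mathrm{cycl}})$ with $c(\tau)=1$; $g\tau g^{-1}=\tau^{\chi(g)}$ for $g\in\mathrm{Gal}(L/K_\infty)$.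 $\delta=\frac{\tau^{\chi(\gamma)}-1}{\tau-1}$ is the limit of $1+\tau+\dots+\tau^{\chi_n-1}$, $\chi_n\in\mathbf Z_{>0}$, $\chi_n\to\chi(\gamma)$; it is invertible. Rings: $\tilde{\mathbf A}=W(\mathbf C_p^\flat)$, $\tilde{\mathbf B}=\tilde{\mathbf A}[1/p]$ with Frobenius $\varphi$, $\mathcal G_K$-action; $\tilde{\mathbf B}^{\dagger,r}=\{\sum_{n\gg-\infty}p^n[x_n]: v^\flat(x_n)+\frac{pr}{p-1}n\to\infty\}$; $\mathbf A_{\tau,K}$ the $p$-adic completion of $W(k)[[u]][1/u]$ embedded via $u\mapsto[(\pi_n)_n]$, $\mathbf B_{\tau,K}=\mathbf A_{\tau,K}[1/p]$, $\mathbf B^{\dagger,r}_{\tau,K}=\mathbf B_{\tau,K}\cap\tilde{\mathbf B}^{\dagger,r}$, $\tilde{\mathbf B}^{\dagger,r}_L=(\tilde{\mathbf B}^{\dagger,r})^{H_\infty}$. $S$ is a $\mathbf Q_p$-Banach algebra whose residue fields at maximal ideals are finite over $\mathbf Q_p$; $\hat\otimes$ is over $\mathbf Q_p$. A family of representations is a free $S$-module $V$ of finite rank with continuous $S$-linear $\mathcal G_K$-action. There exist $r_0>0$ and, for $r\ge r_0$, compatible locally free $S\hat\otimes\mathbf B^{\dagger,r}_{\tau,K}$-modules $D^{\dagger,r}_{\tau,K}(V)$ inside $((S\hat\otimes\tilde{\mathbf B}^{\dagger,r})\otimes_SV)^{H_{\tau,K}}$, with $\varphi\otimes 1$ mapping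 level $r$ into level $pr$, and $(S\hat\otimes\tilde{\mathbf B}^{\dagger,r})\otimes D^{\dagger,r}_{\tau,K}(V)\cong(S\hat\otimes\tilde{\mathbf B}^{\dagger,r})\otimes_SV$. $\mathbf D^r_L=(S\hat\otimes\tilde{\mathbf B}^{\dagger,r}_L)\otimes_{S\hat\otimes\mathbf B^{\dagger,r}_{\tau,K}}D^{\dagger,r}_{\tau,K}(V)$ is, via this isomorphism, an $H_\infty$-fixed $\mathcal G_K$-stable submodule of $(S\hat\otimes\tilde{\mathbf B}^{\dagger,r})\otimes_SV$, hence a $G_\infty$-module, and $\varphi=\varphi\otimes1:\mathbf D^r_L\to\mathbf D^{pr}_L$ commutes with $G_\infty$. *)

From HB Require Import structures.
From mathcomp Require Import all_boot all_order all_algebra.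
Set Implicit Arguments. Unset Strict Implicit. Unset Printing Implicit Defensive.
Import GRing.Theory.
Local Open Scope ring_scope.

(* A subquotient Z/B of an abelian group U is given by the predicate Z of    *)
(* representatives (e.g. a kernel) and the predicate B of the subgroup that  *)
(* is divided out (e.g. an image).                                           *)
Record subquot (U : zmodType) := SubQuot { sq_Z : U -> Prop; sq_B : U -> Prop }.

(* A map between subquotients "on classes" is given by a relation R between  *)
(* representatives: R u v means "v represents the image of the class of u".  *)
(* [sq_map_wd A B R] says that R induces a well-defined group homomorphism   *)
(* A -> B: every class has an image, images are representatives of B, the    *)
(* image class depends only on the class (and not on any auxiliary choice), *)
(* and the induced map is additive.                                          *)
Definition sq_map_wd (U V : zmodType) (A : subquot U) (B : subquot V)
    (R : U -> V -> Prop) : Prop :=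
  [/\ forall u, sq_Z A u -> exists v, R u v,
      forall u v, sq_Z A u -> R u v -> sq_Z B v,
      forall u1 u2 v1 v2, sq_Z A u1 -> sq_Z A u2 -> R u1 v1 -> R u2 v2 ->
        sq_B A (u1 - u2) -> sq_B B (v1 - v2)
    & forall u1 u2 v1 v2 w, sq_Z A u1 -> sq_Z A u2 -> R u1 v1 -> R u2 v2 ->
        R (u1 + u2) w -> sq_B B (w - (v1 + v2))].

Definition sq_inj (U V : zmodType) (A : subquot U) (B : subquot V)
    (R : U -> V -> Prop) : Prop :=
  forall u v, sq_Z A u -> R u v -> sq_B B v -> sq_B A u.

Definition sq_surj (U V : zmodType) (A : subquot U) (B : subquot V)
    (R : U -> V -> Prop) : Prop :=
  forall v, sq_Z B v -> exists u v', [/\ sq_Z A u, R u v' & sq_B B (v - v')].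

Definition sq_exact (U V W : zmodType) (A : subquot U) (B : subquot V)
    (C : subquot W) (R1 : U -> V -> Prop) (R2 : V -> W -> Prop) : Prop :=
  forall v, sq_Z B v ->
    ((exists w, R2 v w /\ sq_B C w) <->
     (exists u v', [/\ sq_Z A u, R1 u v' & sq_B B (v - v')])).

Definition graph (U V : Type) (f : U -> V) : U -> V -> Prop :=
  fun u v => v = f u.

Record phiGammaData (S : pzRingType) := PhiGammaData {
  Dr : lmodType S;
  Dpr : lmodType S;
  incl : {linear Dr -> Dpr};
  phi : {linear Dr -> Dpr};
  gam_r : {linear Dr -> Dr};
  tau_r : {linear Dr -> Dr};
  del_r : {linear Dr -> Dr};
  deli_r : {linear Dr -> Dr};
  gam_p : {linear Dpr -> Dpr};
  tau_p : {linear Dpr -> Dpr};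
  del_p : {linear Dpr -> Dpr};
  deli_p : {linear Dpr -> Dpr}
}.

Section Complexes.
Variables (S : pzRingType) (D : phiGammaData S).
Local Notation Dr := (Dr D).
Local Notation Dpr := (Dpr D).

Definition phim1 (a : Dr) : Dpr := phi D a - incl D a.
Definition Delta_r (a : Dr) : Dr := deli_r D (gam_r D a).
Definition Delta_p (a : Dpr) : Dpr := deli_p D (gam_p D a).

Definition M0 (z : Dr) : Prop := phi D z = incl D z.
(* membership in (phi - 1) D^r, the subgroup defining N = D^{pr}/(phi-1)D^r *)
Definition in_imphi (x : Dpr) : Prop := exists y : Dr, x = phim1 y.

Definition d0 (a : Dr) : Dpr * Dr * Dr :=
  (phim1 a, gam_r D a - a, tau_r D a - a).
Definition d1 (x : Dpr * Dr * Dr) : Dpr * Dpr * Dr :=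
  let: (a, b, c) := x in
  ((gam_p D a - a) - phim1 b,
   (tau_p D a - a) - phim1 c,
   (tau_r D b - b) + (c - Delta_r c)).
Definition d2 (x : Dpr * Dpr * Dr) : Dpr :=
  let: (a, b, c) := x in
  (tau_p D a - a) + (b - Delta_p b) + phim1 c.

Definition H1M0 : subquot ((Dr * Dr)%type) :=
  SubQuot (fun p : (Dr * Dr)%type => [/\ M0 p.1, M0 p.2 &
                      (tau_r D p.1 - p.1) + (p.2 - Delta_r p.2) = 0])
          (fun p => exists m, M0 m /\ p = (gam_r D m - m, tau_r D m - m)).

Definition H1tot : subquot ((Dpr * Dr * Dr)%type) :=
  SubQuot (fun x => d1 x = 0) (fun x => exists a, x = d0 a).

(* N^{tau = 1, gamma = 1}, represented in D^{pr} modulo (phi-1) D^r *)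
Definition H0N : subquot Dpr :=
  SubQuot (fun x => in_imphi (tau_p D x - x) /\ in_imphi (gam_p D x - x))
          in_imphi.

Definition H2M0 : subquot Dr :=
  SubQuot M0 (fun z => exists a b, [/\ M0 a, M0 b &
                         z = (tau_r D a - a) + (b - Delta_r b)]).

Definition H2tot : subquot ((Dpr * Dpr * Dr)%type) :=
  SubQuot (fun x => d2 x = 0) (fun x => exists y, x = d1 y).

(* ker g_N / im f_N, represented in D^{pr} x D^{pr} (N = D^{pr}/(phi-1)D^r) *)
Definition H1N : subquot ((Dpr * Dpr)%type) :=
  SubQuot (fun p : (Dpr * Dpr)%type =>
             in_imphi ((tau_p D p.1 - p.1) + (p.2 - Delta_p p.2)))
          (fun p => exists m, in_imphi (p.1 - (gam_p D m - m)) /\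
                              in_imphi (p.2 - (tau_p D m - m))).

Definition delta1 : Dr * Dr -> Dpr * Dr * Dr -> Prop :=
  graph (fun p : (Dr * Dr)%type => (0, p.1, p.2)).
Definition delta2 : Dpr * Dr * Dr -> Dpr -> Prop :=
  graph (fun x : (Dpr * Dr * Dr)%type => x.1.1).
Definition delta3 (x : Dpr) (w : Dr) : Prop :=
  exists y_x z_x : Dr, [/\ gam_p D x - x = phim1 y_x,
                           tau_p D x - x = phim1 z_x &
                           w = (tau_r D y_x - y_x) + (z_x - Delta_r z_x)].
Definition delta4 : Dr -> Dpr * Dpr * Dr -> Prop :=
  graph (fun z : Dr => (0, 0, z)).
Definition delta5 : Dpr * Dpr * Dr -> Dpr * Dpr -> Prop :=
  graph (fun x : (Dpr * Dpr * Dr)%type => (x.1.1, x.1.2)).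

End Complexes.

Arguments delta1 {S} D _ _.
Arguments delta2 {S} D _ _.
Arguments delta3 {S} D _ _.
Arguments delta4 {S} D _ _.
Arguments delta5 {S} D _ _.

From HB Require Import structures.
From mathcomp Require Import all_boot all_order all_algebra.
Import GRing.Theory.
Local Open Scope ring_scope.

(* The maps f_M and g_M make every G_infinity-module M into a complex
   M -> M^2 -> M: the relation gamma (tau - 1) = delta (tau - 1) gamma gives
   g_M o f_M = 0.  Since phi - 1 commutes with gamma, tau and delta^{-1} gamma,
   d_0, d_1, d_2 are the differentials of the total complex of the double
   complex phi - 1 : C(D^r) -> C(D^{pr}).  Taking the cohomology of phi - 1
   first leaves the complexes C(M_0) and C(N), and the six-term sequence is the
   resulting exact sequence in low degrees.  Each claim is a diagram chase on
   representatives using only g o f = 0, the additivity of g and the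
   commutation of phi - 1 with the operators. *)

Lemma subrACA {V : zmodType} (a b c d : V) : a - b - (c - d) = a - c - (b - d).
Proof. by rewrite !opprB addrACA [in RHS]addrACA [- b + _]addrC. Qed.

Lemma subr_pair {U V : zmodType} (a a' : U) (b b' : V) :
  (a, b) - (a', b') = (a - a', b - b').
Proof. by []. Qed.

Lemma pair_eq0 {U V : zmodType} (a : U) (b : V) : (a, b) = 0 <-> a = 0 /\ b = 0.
Proof. by split=> [[-> ->] | [-> ->]]. Qed.

(* [t a - a + (b - d b)] is g_M, with t = tau and d = delta^{-1} gamma. *)
Section GMap.
Context {V : zmodType} {t d : {additive V -> V}}.

Lemma gmapB a1 a2 b1 b2 :
  t (a1 - a2) - (a1 - a2) + ((b1 - b2) - d (b1 - b2))
  = (t a1 - a1 + (b1 - d b1)) - (t a2 - a2 + (b2 - d b2)).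
Proof.
by rewrite !(raddfB t, raddfB d) (subrACA (t a1)) (subrACA b1) -addrACA -opprD.
Qed.

Lemma gmapD a1 a2 b1 b2 :
  t (a1 + a2) - (a1 + a2) + ((b1 + b2) - d (b1 + b2))
  = (t a1 - a1 + (b1 - d b1)) + (t a2 - a2 + (b2 - d b2)).
Proof.
rewrite (raddfD t) (raddfD d) !opprD [t a1 + _ + _]addrACA [b1 + _ + _]addrACA.
by rewrite (addrACA (t a1 - a1)).
Qed.

Lemma gmap_fmap {g : {additive V -> V}} :
    (forall x, d (t x - x) = t (g x) - g x) ->
  forall a, t (g a - a) - (g a - a) + ((t a - a) - d (t a - a)) = 0.
Proof. by move=> dt a; rewrite dt (raddfB t) subrACA addrC subrKA subrr. Qed.

Lemma gmapN a b : t (- a) - (- a) + (- b - d (- b)) = - (t a - a + (b - d b)).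
Proof. by rewrite (raddfN t) (raddfN d) -!opprD. Qed.

End GMap.

Lemma graph_wd (U V : zmodType) (A : subquot U) (B : subquot V) (f : U -> V) :
    zmod_morphism f -> sq_B B 0 ->
    (forall u, sq_Z A u -> sq_Z B (f u)) ->
    (forall u, sq_B A u -> sq_B B (f u)) ->
  sq_map_wd A B (graph f).
Proof.
move=> fB B0 f_cycle f_bnd.
have f0 : f 0 = 0 by rewrite -(subrr 0) fB subrr.
have fN x : f (- x) = - f x by rewrite -sub0r fB f0 sub0r.
have fD x y : f (x + y) = f x + f y by rewrite -[in LHS](opprK y) fB fN opprK.
split=> [u _ | u v Au -> | u1 u2 v1 v2 _ _ -> -> /f_bnd
        | u1 u2 v1 v2 w _ _ -> -> ->].
- by exists (f u).
- exact: f_cycle.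
- by rewrite fB.
- by rewrite fD subrr.
Qed.

Lemma phim1_is_zmod_morphism {S : pzRingType} (D : phiGammaData S) :
  zmod_morphism (@phim1 S D).
Proof.
by move=> x y; rewrite /phim1 (raddfB (phi D)) (raddfB (incl D)) subrACA.
Qed.
HB.instance Definition _ (S : pzRingType) (D : phiGammaData S) :=
  GRing.isZmodMorphism.Build _ _ (@phim1 S D) (phim1_is_zmod_morphism D).

Lemma Delta_r_is_zmod_morphism {S : pzRingType} (D : phiGammaData S) :
  zmod_morphism (@Delta_r S D).
Proof. by move=> x y; rewrite /Delta_r !raddfB. Qed.
HB.instance Definition _ (S : pzRingType) (D : phiGammaData S) :=
  GRing.isZmodMorphism.Build _ _ (@Delta_r S D) (Delta_r_is_zmod_morphism D).

Lemma Delta_p_is_zmod_morphism {S : pzRingType} (D : phiGammaData S) :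
  zmod_morphism (@Delta_p S D).
Proof. by move=> x y; rewrite /Delta_p !raddfB. Qed.
HB.instance Definition _ (S : pzRingType) (D : phiGammaData S) :=
  GRing.isZmodMorphism.Build _ _ (@Delta_p S D) (Delta_p_is_zmod_morphism D).

Section PhiGammaComplexes.
Variables (S : pzRingType) (D : phiGammaData S).
Hypotheses (gam_iota : forall x, gam_p D (incl D x) = incl D (gam_r D x))
  (tau_iota : forall x, tau_p D (incl D x) = incl D (tau_r D x))
  (del_iota : forall x, del_p D (incl D x) = incl D (del_r D x))
  (gam_phi : forall x, gam_p D (phi D x) = phi D (gam_r D x))
  (tau_phi : forall x, tau_p D (phi D x) = phi D (tau_r D x))
  (del_phi : forall x, del_p D (phi D x) = phi D (del_r D x))
  (del_r_K : cancel (del_r D) (deli_r D))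
  (deli_r_K : cancel (deli_r D) (del_r D))
  (del_p_K : cancel (del_p D) (deli_p D))
  (deli_p_K : cancel (deli_p D) (del_p D))
  (gam_tau_r : forall x, gam_r D (tau_r D x - x)
                         = del_r D (tau_r D (gam_r D x) - gam_r D x))
  (gam_tau_p : forall x, gam_p D (tau_p D x - x)
                         = del_p D (tau_p D (gam_p D x) - gam_p D x)).

Local Notation P := (@phim1 S D).
Local Notation gM a b := (tau_r D a - a + (b - Delta_r b)).
Local Notation gN a b := (tau_p D a - a + (b - Delta_p b)).

Lemma gam_phim1 (y : Dr D) : gam_p D (P y) = P (gam_r D y).
Proof. by rewrite /phim1 linearB gam_phi gam_iota. Qed.

Lemma tau_phim1 (y : Dr D) : tau_p D (P y) = P (tau_r D y).
Proof. by rewrite /phim1 linearB tau_phi tau_iota. Qed.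

Lemma deli_comm {f : Dr D -> Dpr D} :
  (forall x, del_p D (f x) = f (del_r D x)) ->
  forall x, deli_p D (f x) = f (deli_r D x).
Proof.
by move=> del_f x; apply: (can_inj del_p_K); rewrite deli_p_K del_f deli_r_K.
Qed.

Lemma Delta_phim1 (y : Dr D) : Delta_p (P y) = P (Delta_r y).
Proof.
rewrite /Delta_p /Delta_r gam_phim1 /phim1 linearB.
by rewrite (deli_comm del_phi) (deli_comm del_iota).
Qed.

Lemma Delta_r_tau1 u :
  Delta_r (tau_r D u - u) = tau_r D (gam_r D u) - gam_r D u.
Proof. by rewrite /Delta_r gam_tau_r del_r_K. Qed.

Lemma Delta_p_tau1 u :
  Delta_p (tau_p D u - u) = tau_p D (gam_p D u) - gam_p D u.
Proof. by rewrite /Delta_p gam_tau_p del_p_K. Qed.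

Lemma gM_fM a : gM (gam_r D a - a) (tau_r D a - a) = 0.
Proof. exact: (gmap_fmap Delta_r_tau1). Qed.

Lemma gN_fN a : gN (gam_p D a - a) (tau_p D a - a) = 0.
Proof. exact: (gmap_fmap Delta_p_tau1). Qed.

Lemma phim1_gM (y z : Dr D) : P (gM y z) = gN (P y) (P z).
Proof. by rewrite raddfD !(raddfB P) tau_phim1 Delta_phim1. Qed.

Lemma phim1_gam1 (a : Dr D) : P (gam_r D a - a) = gam_p D (P a) - P a.
Proof. by rewrite raddfB gam_phim1. Qed.

Lemma phim1_tau1 (a : Dr D) : P (tau_r D a - a) = tau_p D (P a) - P a.
Proof. by rewrite raddfB tau_phim1. Qed.

Lemma M0_phim1 (z : Dr D) : M0 z <-> P z = 0.
Proof.
by rewrite /M0 /phim1; split=> [-> | /subr0_eq]; first rewrite subrr.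
Qed.

Lemma M0_sub (y y' : Dr D) : P y = P y' -> M0 (y - y').
Proof. by move=> eq_y; apply/M0_phim1; rewrite raddfB /= eq_y subrr. Qed.

Lemma in_imphi0 : in_imphi (0 : Dpr D).
Proof. by exists 0; rewrite raddf0. Qed.

Lemma H2M0_B0 : sq_B (H2M0 D) 0.
Proof. by exists 0, 0; rewrite /M0 !raddf0 !addr0. Qed.

Lemma H1N_B0 : sq_B (H1N D) 0.
Proof. by exists 0; split; exists 0; rewrite /= !raddf0 addr0 subr0. Qed.

Lemma H2M0_gM (a b : Dr D) : M0 a -> M0 b -> sq_B (H2M0 D) (gM a b).
Proof. by move=> Ma Mb; exists a, b. Qed.

Lemma H2M0_boundary {x : Dpr D} {a y z : Dr D} : x = P a ->
  gam_p D x - x = P y -> tau_p D x - x = P z -> sq_B (H2M0 D) (gM y z).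
Proof.
move=> -> Ey Ez.
rewrite -[y](subrK (gam_r D a - a)) -[z](subrK (tau_r D a - a)).
rewrite gmapD gM_fM addr0; apply: H2M0_gM; apply: M0_sub.
- by rewrite phim1_gam1 Ey.
- by rewrite phim1_tau1 Ez.
Qed.

Lemma delta1_wd : sq_map_wd (H1M0 D) (H1tot D) (delta1 D).
Proof.
apply: graph_wd.
- by move=> [y1 z1] [y2 z2]; rewrite /= !subr_pair subr0.
- by exists 0; rewrite /d0 raddf0 !linear0 !addr0.
- move=> [y z] [/M0_phim1 My /M0_phim1 Mz gyz].
  by rewrite /d1 /= My Mz gyz !linear0 !addr0.
- by move=> _ [m [/M0_phim1 Mm ->]]; exists m; rewrite /d0 Mm.
Qed.

Lemma delta2_wd : sq_map_wd (H1tot D) (H0N D) (delta2 D).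
Proof.
apply: graph_wd.
- by move=> [[x1 y1] z1] [[x2 y2] z2].
- exact: in_imphi0.
- move=> [[x y] z] /pair_eq0 [/pair_eq0 [/subr0_eq Ex /subr0_eq Ey] _].
  by split; [exists z | exists y].
- by move=> _ [a ->]; exists a.
Qed.

Lemma delta3_wd : sq_map_wd (H0N D) (H2M0 D) (delta3 D).
Proof.
split.
- by move=> x [[z Ez] [y Ey]]; exists (gM y z), y, z.
- move=> x _ _ [y [z [Ey Ez ->]]].
  by apply/M0_phim1; rewrite phim1_gM -Ey -Ez gN_fN.
- move=> x1 x2 _ _ _ _ [y1 [z1 [Ey1 Ez1 ->]]] [y2 [z2 [Ey2 Ez2 ->]]] [a Ea].
  rewrite -gmapB; apply: (H2M0_boundary Ea).
  + by rewrite linearB (raddfB P) /= -Ey1 -Ey2 subrACA.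
  + by rewrite linearB (raddfB P) /= -Ez1 -Ez2 subrACA.
- move=> x1 x2 _ _ _ _ _ [y1 [z1 [Ey1 Ez1 ->]]] [y2 [z2 [Ey2 Ez2 ->]]]
    [y3 [z3 [Ey3 Ez3 ->]]].
  rewrite -gmapD -gmapB; apply: H2M0_gM; apply: M0_sub.
  + by rewrite (raddfD P) /= -Ey1 -Ey2 -Ey3 linearD opprD addrACA.
  + by rewrite (raddfD P) /= -Ez1 -Ez2 -Ez3 linearD opprD addrACA.
Qed.

Lemma delta4_wd : sq_map_wd (H2M0 D) (H2tot D) (delta4 D).
Proof.
apply: graph_wd.
- by move=> z1 z2; rewrite /= !subr_pair !subr0.
- by exists 0; rewrite /d1 /= !raddf0 !addr0.
- by move=> z /M0_phim1 Mz; rewrite /d2 /= Mz !raddf0 !addr0.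
- move=> _ [a [b [/M0_phim1 Ma /M0_phim1 Mb ->]]].
  by exists (0, a, b); rewrite /d1 /= Ma Mb !linear0 !addr0.
Qed.

Lemma delta5_wd : sq_map_wd (H2tot D) (H1N D) (delta5 D).
Proof.
apply: graph_wd.
- by move=> [[a1 b1] c1] [[a2 b2] c2].
- exact: H1N_B0.
- move=> [[a b] c] /= /eqP; rewrite addr_eq0 => /eqP dabc.
  by exists (- c); rewrite raddfN.
- move=> _ [[[x y] z] ->]; exists x.
  by split; [exists (- y) | exists (- z)]; rewrite /= addrAC subrr add0r raddfN.
Qed.

Lemma delta1_inj : sq_inj (H1M0 D) (H1tot D) (delta1 D).
Proof.
move=> [y z] _ _ -> [a]; rewrite /d0 => -[Pa -> ->].
by exists a; split=> //; apply/M0_phim1; rewrite -Pa.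
Qed.

Lemma delta1_delta2_exact :
  sq_exact (H1M0 D) (H1tot D) (H0N D) (delta1 D) (delta2 D).
Proof.
move=> [[x y] z] /pair_eq0 [/pair_eq0 [/subr0_eq Ex /subr0_eq Ey] gyz]; split.
- move=> [_ [-> [a /= Pa]]].
  have My : M0 (y - (gam_r D a - a)).
    by apply: M0_sub; rewrite phim1_gam1 -Pa Ex.
  have Mz : M0 (z - (tau_r D a - a)).
    by apply: M0_sub; rewrite phim1_tau1 -Pa Ey.
  exists (y - (gam_r D a - a), z - (tau_r D a - a)).
  exists (0, y - (gam_r D a - a), z - (tau_r D a - a)); split=> //.
  + by split=> //=; rewrite gmapB gyz gM_fM subrr.
  + by exists a; rewrite /d0 !subr_pair subr0 -Pa !subKr.
- move=> [u [_ [_ -> [e]]]]; rewrite !subr_pair /d0 => -[Pe _ _].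
  by exists x; split=> //; exists e; rewrite -Pe subr0.
Qed.

Lemma delta2_delta3_exact :
  sq_exact (H1tot D) (H0N D) (H2M0 D) (delta2 D) (delta3 D).
Proof.
move=> x _; split.
- move=> [_ [[y [z [Ey Ez ->]]] [a [b [/M0_phim1 Ma /M0_phim1 Mb Eab]]]]].
  exists (x, y - a, z - b), x; split=> //.
  + by rewrite /= gmapB Eab subrr !(raddfB P) /= Ma Mb !subr0 Ey Ez !subrr.
  + by rewrite subrr; exact: in_imphi0.
- move=> [[[x' y'] z'] [v' []]].
  move=> /pair_eq0 [/pair_eq0 [/subr0_eq Ey' /subr0_eq Ez'] gyz'] -> [e /= Pe].
  have -> : x = x' + P e by rewrite -Pe subrKC.
  exists 0; split; last exact: H2M0_B0.
  exists (y' + (gam_r D e - e)), (z' + (tau_r D e - e)); split.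
  + by rewrite linearD (raddfD P) /= phim1_gam1 -Ey' opprD addrACA.
  + by rewrite linearD (raddfD P) /= phim1_tau1 -Ez' opprD addrACA.
  + by rewrite gmapD gyz' gM_fM addr0.
Qed.

Lemma delta3_delta4_exact :
  sq_exact (H0N D) (H2M0 D) (H2tot D) (delta3 D) (delta4 D).
Proof.
move=> z _; split.
- move=> [_ [-> [[[c a] b]]]].
  rewrite /d1 => -[/esym/subr0_eq Ea /esym/subr0_eq Eb ->].
  exists c, (gM a b); split.
  + by split; [exists b | exists a].
  + by exists a, b.
  + by rewrite subrr; exact: H2M0_B0.
- move=> [x [_ [_ [y [z' [Ey Ez ->]]]]]].
  move=> [a [b [/M0_phim1 Ma /M0_phim1 Mb Eab]]].
  exists (0, 0, z); split=> //.
  exists (x, y + a, z' + b); rewrite /d1 gmapD -Eab subrKC.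
  by rewrite !(raddfD P) /= Ma Mb !addr0 -Ey -Ez !subrr.
Qed.

Lemma delta4_delta5_exact :
  sq_exact (H2M0 D) (H2tot D) (H1N D) (delta4 D) (delta5 D).
Proof.
move=> [[a b] c] /= dabc; split.
- move=> [_ [-> [m [[y /= Ey] [z /= Ez]]]]].
  exists (c + gM y z), (0, 0, c + gM y z); split=> //.
  + apply/M0_phim1; rewrite (raddfD P) /= phim1_gM -Ey -Ez gmapB gN_fN subr0.
    by rewrite addrC.
  + exists (m, - y, - z); rewrite /d1 !subr_pair !subr0 gmapN !raddfN /= !opprK.
    by rewrite -Ey -Ez !subrKC opprD addNKr.
- move=> [u [_ [_ -> [[[x y] z]]]]].
  rewrite !subr_pair /d1 !subr0 => -[Ea Eb _].
  exists (a, b); split=> //; exists x.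
  split; [exists (- y) | exists (- z)];
    by rewrite /= ?Ea ?Eb addrAC subrr add0r raddfN.
Qed.

Lemma delta5_surj : sq_surj (H2tot D) (H1N D) (delta5 D).
Proof.
move=> [a b] [e /= Pe]; exists (a, b, - e), (a, b); split.
- by rewrite /d2 /= Pe raddfN subrr.
- by [].
- by move: H1N_B0; rewrite -(subrr (a, b)).
Qed.

End PhiGammaComplexes.

Theorem proposition4p1 (S : pzRingType) (D : phiGammaData S)
  (* D^r ⊆ D^{pr} *)
  (incl_inj : injective (incl D))
  (* the G_infinity-action (gamma, tau, delta) is compatible with D^r ⊆ D^{pr} *)
  (gam_iota : forall x, gam_p D (incl D x) = incl D (gam_r D x))
  (tau_iota : forall x, tau_p D (incl D x) = incl D (tau_r D x))
  (del_iota : forall x, del_p D (incl D x) = incl D (del_r D x))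
  (* phi commutes with G_infinity *)
  (gam_phi : forall x, gam_p D (phi D x) = phi D (gam_r D x))
  (tau_phi : forall x, tau_p D (phi D x) = phi D (tau_r D x))
  (del_phi : forall x, del_p D (phi D x) = phi D (del_r D x))
  (* delta is invertible, with inverse deli *)
  (del_r_K : cancel (del_r D) (deli_r D))
  (deli_r_K : cancel (deli_r D) (del_r D))
  (del_p_K : cancel (del_p D) (deli_p D))
  (deli_p_K : cancel (deli_p D) (del_p D))
  (* delta is a limit of polynomials in tau, so it commutes with tau *)
  (del_tau_r : forall x, del_r D (tau_r D x) = tau_r D (del_r D x))
  (del_tau_p : forall x, del_p D (tau_p D x) = tau_p D (del_p D x))
  (* gamma tau gamma^{-1} = tau^{chi(gamma)} and delta (tau - 1) = tau^{chi(gamma)} - 1,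
     i.e. gamma (tau - 1) = delta (tau - 1) gamma *)
  (gam_tau_r : forall x, gam_r D (tau_r D x - x)
                         = del_r D (tau_r D (gam_r D x) - gam_r D x))
  (gam_tau_p : forall x, gam_p D (tau_p D x - x)
                         = del_p D (tau_p D (gam_p D x) - gam_p D x)) :
  (* well-definedness of delta_1, ..., delta_5 *)
  [/\ sq_map_wd (H1M0 D) (H1tot D) (delta1 D),
      sq_map_wd (H1tot D) (H0N D) (delta2 D),
      sq_map_wd (H0N D) (H2M0 D) (delta3 D),
      sq_map_wd (H2M0 D) (H2tot D) (delta4 D)
    & sq_map_wd (H2tot D) (H1N D) (delta5 D)] /\
  (* exactness of 0 -> . -> . -> . -> . -> . -> . -> 0 *)
  [/\ sq_inj (H1M0 D) (H1tot D) (delta1 D),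
      sq_exact (H1M0 D) (H1tot D) (H0N D) (delta1 D) (delta2 D),
      sq_exact (H1tot D) (H0N D) (H2M0 D) (delta2 D) (delta3 D),
      sq_exact (H0N D) (H2M0 D) (H2tot D) (delta3 D) (delta4 D)
    & sq_exact (H2M0 D) (H2tot D) (H1N D) (delta4 D) (delta5 D)] /\
  sq_surj (H2tot D) (H1N D) (delta5 D).
Proof.
split; [split | split; [split | ]].
- exact: delta1_wd.
- exact: delta2_wd.
- by apply: delta3_wd.
- exact: delta4_wd.
- exact: delta5_wd.
- exact: delta1_inj.
- by apply: delta1_delta2_exact.
- by apply: delta2_delta3_exact.
- by apply: delta3_delta4_exact.
- by apply: delta4_delta5_exact.
- exact: delta5_surj.
Qed.
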